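(* For every (finite, simple, undirected) graph $G$ with at least two vertices, $\kappa_2(\overleftrightarrow{G})=\kappa(G)$.
   Context: $\overleftrightarrow{G}$ denotes the complete biorientation of $G$: the digraph with vertex set $V(G)$ obtained by replacing each edge $xy$ of $G$ by the two arcs $xy$ and $yx$. For distinct vertices $x,y$ of $G$, $\kappa_{\{x,y\}}(G)$ is the maximum number of internally disjoint $x$–$y$ paths in $G$, and $\kappa(G)=\min\{\kappa_{\{x,y\}}(G): x,y\in V(G), x\ne y\}$ (so $\kappa(G)=0$ if $G$ is disconnected). A digraph is strong if for every ordered pair of vertices $u,v$ there is a directed path from $u$ to $v$. For a digraph $D$ and $S\subseteq V(D)$, strong subgraphs $D_1,\dots,D_p$ each containing $S$ are $S$-internally disjoint if $V(D_i)\cap V(D_j)=S$ and $A(D_i)\cap A(D_j)=\emptyset$ for $i<j$; $\kappa_S(D)$ is the maximum number of such subgraphs, and $\kappa_2(D)=\min\{\kappa_S(D): S\subseteq V(D), |S|=2\}$. *)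

From mathcomp Require Import all_boot.
From mathcomp Require Import boolp.
Set Implicit Arguments.
Unset Strict Implicit.
Unset Printing Implicit Defensive.

Section Defs.
Variable T : finType.

(* A finite simple undirected graph on vertex set T is given by a symmetric,
   irreflexive adjacency relation [g]; a digraph on T by its arc relation. *)

(* Complete biorientation: arcs xy and yx for every edge xy of G.  As an arc
   relation, it is exactly the adjacency relation of G. *)
Definition biorient (g : rel T) : rel T := fun u v => g u v.

Definition is_xy_path (g : rel T) (x y : T) (p : seq T) : bool :=
  [&& uniq (x :: p), path g x p & last x p == y].

Definition has_int_disj_paths (g : rel T) (x y : T) (k : nat) : Prop :=
  exists P : 'I_k -> seq T,
    injective P /\
    (forall i, is_xy_path g x y (P i)) /\
    (forall i j, i != j -> forall v, v \in P i -> v \in P j -> v = y).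

(* The search bound #|T| is harmless: every such path either is the edge xy
   or has its own internal vertex, so there are at most #|T| - 1 of them. *)
Definition kappa_xy (g : rel T) (x y : T) : nat :=
  \max_(k < #|T|.+1 | `[< has_int_disj_paths g x y k >]) (k : nat).

(* kappa(G) = min over distinct x, y (the neutral element #|T| is an upper
   bound of all kappa_xy, so it never affects the minimum when #|T| >= 2). *)
Definition kappa (g : rel T) : nat :=
  \big[minn/#|T|]_(x : T) \big[minn/#|T|]_(y : T | y != x) kappa_xy g x y.

Definition subdigraph (D : rel T) (H : {set T} * {set T * T}) : bool :=
  [forall a in H.2, [&& D a.1 a.2, a.1 \in H.1 & a.2 \in H.1]].

Definition strong_sub (H : {set T} * {set T * T}) : bool :=
  [forall u in H.1, forall v in H.1,
     connect (fun a b => (a, b) \in H.2) u v].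

Definition has_S_int_disj (D : rel T) (S : {set T}) (k : nat) : Prop :=
  exists F : 'I_k -> {set T} * {set T * T},
    (forall i, [&& subdigraph D (F i), strong_sub (F i) & S \subset (F i).1]) /\
    (forall i j, i != j ->
       (F i).1 :&: (F j).1 = S /\ (F i).2 :&: (F j).2 = set0).

(* Bound #|T| is harmless for |S| = 2: each such subgraph contains an arc
   leaving a fixed vertex of S, and these arcs are pairwise distinct. *)
Definition kappa_S (D : rel T) (S : {set T}) : nat :=
  \max_(k < #|T|.+1 | `[< has_S_int_disj D S k >]) (k : nat).

Definition kappa2 (D : rel T) : nat :=
  \big[minn/#|T|]_(S : {set T} | #|S| == 2) kappa_S D S.

End Defs.

From mathcomp Require Import all_boot order.
From mathcomp Require Import boolp.
Set Implicit Arguments.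
Unset Strict Implicit.
Unset Printing Implicit Defensive.

Import Order.TTheory.

(* For S = {x, y} we show kappa_S(<->G) = kappa_{x,y}(G).  An x-y path P of G
   yields the strong subgraph of <->G spanned by V(P) whose arcs are the edges
   of G inside V(P) in both directions, except the arcs between x and y unless
   P is the edge xy itself; internally disjoint paths give S-internally
   disjoint subgraphs because two subgraphs can only share arcs between x and
   y.  Conversely a shortest x-y dipath in each of k S-internally disjoint
   strong subgraphs gives k internally disjoint x-y paths, distinct because
   their first arcs are distinct. *)

Section Paths.
Variable T : finType.
Implicit Types (e : rel T) (x y : T) (p : seq T).

Lemma uniq_last_self x p : uniq (x :: p) -> (last x p == x) = (p == [::]).
Proof.
case/lastP: p => [|p z]; first by rewrite !eqxx.
rewrite last_rcons /= mem_rcons inE negb_or => /andP[/andP[xNz _] _].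
by rewrite eq_sym (negbTE xNz); case: p.
Qed.

Lemma path_avoids_xy_arc e x y p :
  irreflexive e -> uniq (x :: p) -> last x p = y -> p != [:: y] -> path e x p ->
  path (fun u v => e u v && ~~ ((u \in [set x; y]) && (v \in [set x; y]))) x p.
Proof.
move=> e_irr; case: p => [//|b q] /andP[xNbq uniq_bq] /= last_y ne_y /andP[exb path_bq].
have bNx : b != x by apply: contraNneq xNbq => <-; apply: mem_head.
have bNy : b != y.
  apply: contra ne_y => /eqP b_y; rewrite -b_y in last_y *.
  by rewrite eqseq_cons eqxx -(uniq_last_self uniq_bq) last_y eqxx.
rewrite exb !inE (negbTE bNx) (negbTE bNy) andbF /=.
apply: (sub_in_path (P := [pred u | u != x])) path_bq; last first.
  by apply/allP => u; apply: contraTneq => ->.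
move=> u v /= uNx vNx euv; rewrite euv !inE (negbTE uNx) (negbTE vNx) /=.
by apply/negP => /andP[/eqP u_y /eqP v_y]; rewrite u_y v_y e_irr in euv.
Qed.

Lemma path_connect_both e x p :
  path (fun u v => e u v && e v u) x p ->
  {in x :: p, forall v, connect e x v && connect e v x}.
Proof.
elim: p x => [|b p IHp] x /=; first by move=> _ v; rewrite inE => /eqP->; rewrite connect0.
case/andP=> /andP[exb ebx] path_bp v; rewrite inE => /predU1P[->|v_bp].
  by rewrite connect0.
case/andP: (IHp b path_bp v v_bp) => bv vb.
by rewrite (connect_trans (connect1 exb) bv) (connect_trans vb (connect1 ebx)).
Qed.

End Paths.

Section Subgraphs.
Variable T : finType.
Implicit Types (D g : rel T) (x y : T) (p : seq T) (H : {set T} * {set T * T}).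

Lemma subdigraph_path D H x p :
  subdigraph D H -> path (fun a b => (a, b) \in H.2) x p ->
  path D x p /\ {subset p <= H.1}.
Proof.
move=> /forallP subH; elim: p x => [//|b p IHp] x /= /andP[xb /IHp[path_bp sub_p]].
have /implyP/(_ xb)/and3P[xb_D _ bH] := subH (x, b).
by split=> [|v /predU1P[->|/sub_p]]; rewrite ?xb_D.
Qed.

Lemma strong_sub_path H x y :
  strong_sub H -> x \in H.1 -> y \in H.1 ->
  exists p, is_xy_path (fun a b => (a, b) \in H.2) x y p.
Proof.
move=> /forallP/(_ x)/implyP strongH xH yH.
have /forallP/(_ y)/implyP/(_ yH)/connectP[p path_p ->] := strongH xH.
have [q path_q uniq_q _] := shortenP path_p.
by exists q; rewrite /is_xy_path uniq_q path_q eqxx.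
Qed.

Definition path_vertices x p : {set T} := [set v | v \in x :: p].

(* The arcs between the ends are kept only when the path is the single edge xy:
   this is what makes the subgraphs of distinct paths arc-disjoint. *)
Definition path_subgraph g x y p : {set T} * {set T * T} :=
  (path_vertices x p,
   [set a | [&& g a.1 a.2, a.1 \in path_vertices x p, a.2 \in path_vertices x p &
              (p == [:: y]) || ~~ ((a.1 \in [set x; y]) && (a.2 \in [set x; y]))]]).

Lemma subdigraph_path_subgraph g x y p : subdigraph (biorient g) (path_subgraph g x y p).
Proof. by apply/forallP => a; apply/implyP; rewrite inE /biorient => /and4P[-> -> ->]. Qed.

Lemma sub_path_subgraph g x y p :
  is_xy_path g x y p -> [set x; y] \subset (path_subgraph g x y p).1.
Proof.
case/and3P=> _ _ /eqP last_y; apply/subsetP => v; rewrite /= in_set2 in_set.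
by case/predU1P=> [->|/eqP->]; rewrite ?mem_head // -{1}last_y mem_last.
Qed.

Lemma strong_path_subgraph g x y p :
  symmetric g -> irreflexive g -> is_xy_path g x y p -> strong_sub (path_subgraph g x y p).
Proof.
move=> g_sym g_irr /and3P[uniq_p path_p /eqP last_y].
pose keep u v := (p == [:: y]) || ~~ ((u \in [set x; y]) && (v \in [set x; y])).
have path_keep : path (fun u v => g u v && keep u v) x p.
  rewrite /keep; have [p_y|ne_y] := eqVneq p [:: y].
    by apply: sub_path path_p => u v ->.
  exact: path_avoids_xy_arc.
have path_arcs : path (fun u v => ((u, v) \in (path_subgraph g x y p).2) &&
                                  ((v, u) \in (path_subgraph g x y p).2)) x p.
  apply: (sub_in_path (P := mem (x :: p))) path_keep; last exact/allP.
  move=> u v up vp /andP[guv keep_uv]; rewrite /keep !inE in up vp keep_uv *.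
  by rewrite (g_sym v u) guv up vp keep_uv /= andbC.
apply/forallP => u; apply/implyP; rewrite inE => up.
apply/forallP => v; apply/implyP; rewrite inE => vp.
have /andP[_ ux] := path_connect_both path_arcs up.
have /andP[xv _] := path_connect_both path_arcs vp.
exact: connect_trans ux xv.
Qed.

Lemma path_vertices_inter g x y p q :
  is_xy_path g x y p -> is_xy_path g x y q ->
  (forall v, v \in p -> v \in q -> v = y) ->
  path_vertices x p :&: path_vertices x q = [set x; y].
Proof.
move=> xy_p xy_q disj; apply/eqP; rewrite eqEsubset subsetI.
rewrite (sub_path_subgraph xy_p) (sub_path_subgraph xy_q) !andbT.
apply/subsetP => v; rewrite !inE; case: eqP => //= _ /andP[vp vq].
by rewrite (disj v vp vq) eqxx.
Qed.

Lemma path_subgraph_arcs_disjoint g x y p q :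
  p != q -> path_vertices x p :&: path_vertices x q = [set x; y] ->
  (path_subgraph g x y p).2 :&: (path_subgraph g x y q).2 = set0.
Proof.
move=> pNq Vpq; apply/setP => a; rewrite !inE.
apply/negP => /andP[/and4P[_ a1p a2p keep_p] /and4P[_ a1q a2q keep_q]].
have inS v : (v == x) || (v \in p) -> (v == x) || (v \in q) -> (v == x) || (v == y).
  by move/setP/(_ v): Vpq; rewrite !inE => <- -> ->.
rewrite (inS _ a1p a1q) (inS _ a2p a2q) /= !orbF in keep_p keep_q.
by rewrite (eqP keep_p) (eqP keep_q) eqxx in pNq.
Qed.

End Subgraphs.

Section PairConnectivity.
Variable T : finType.
Variables (g : rel T) (x y : T).

Lemma has_S_int_disj_of_paths k :
  symmetric g -> irreflexive g ->
  has_int_disj_paths g x y k -> has_S_int_disj (biorient g) [set x; y] k.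
Proof.
move=> g_sym g_irr [P [P_inj [P_path P_disj]]].
exists (fun i => path_subgraph g x y (P i)); split=> [i|i j ij].
  by rewrite subdigraph_path_subgraph strong_path_subgraph // sub_path_subgraph.
have Vij := path_vertices_inter (P_path i) (P_path j) (P_disj i j ij).
split=> //; apply: path_subgraph_arcs_disjoint Vij.
by apply: contra ij => /eqP/P_inj->.
Qed.

Lemma has_int_disj_paths_of_S_int_disj k :
  x != y -> has_S_int_disj (biorient g) [set x; y] k -> has_int_disj_paths g x y k.
Proof.
move=> xNy [F [F_strong F_disj]].
have ex_path i : exists p, is_xy_path (fun a b => (a, b) \in (F i).2) x y p.
  have /and3P[_ strongF /subsetP SF] := F_strong i.
  by apply: strong_sub_path; rewrite // SF // !inE eqxx ?orbT.
have [P P_xy] := fin_all_exists ex_path.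
have /all_and3[P_uniq P_arcs P_last] i := and3P (P_xy i).
have F_sub i : subdigraph (biorient g) (F i) by case/and3P: (F_strong i).
have /all_and2[P_path P_in] i := subdigraph_path (F_sub i) (P_arcs i).
exists P; split; [|split].
- move=> i j Pij; apply/eqP/negPn/negP => ij.
  have := P_arcs i; have := P_arcs j; have := P_last i; rewrite -Pij.
  case: (P i) => [/= /eqP yx|b q _ /= /andP[xbj _] /andP[xbi _]].
    by rewrite yx eqxx in xNy.
  by have /setP/(_ (x, b)) := (F_disj i j ij).2; rewrite !inE xbi xbj.
- by move=> i; rewrite /is_xy_path P_uniq P_path P_last.
- move=> i j ij v vi vj.
  have : v \in (F i).1 :&: (F j).1 by rewrite inE (P_in i v vi) (P_in j v vj).
  rewrite (F_disj i j ij).1 !inE => /predU1P[vx|/eqP //].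
  by have /andP[/negP[]] := P_uniq i; rewrite -vx.
Qed.

Lemma kappa_S_biorient_pair :
  symmetric g -> irreflexive g -> x != y ->
  kappa_S (biorient g) [set x; y] = kappa_xy g x y.
Proof.
move=> g_sym g_irr xNy; apply: eq_bigl => k; apply: asbool_equiv_eq.
by split; [exact: has_int_disj_paths_of_S_int_disj | exact: has_S_int_disj_of_paths].
Qed.

End PairConnectivity.

Theorem theorem2p5 (T : finType) (g : rel T)
  (g_sym : symmetric g) (g_irr : irreflexive g) (hT : 1 < #|T|) :
  kappa2 (biorient g) = kappa g.
Proof.
have kappa_pair x y : x != y -> kappa_S (biorient g) [set x; y] = kappa_xy g x y.
  exact: kappa_S_biorient_pair.
apply/eqP; rewrite eqn_leq /kappa2 /kappa -!minEnat -!leEnat; apply/andP; split.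
- apply: le_bigmin => [|x _]; first exact: bigmin_le_id.
  apply: le_bigmin => [|y yNx]; first exact: bigmin_le_id.
  have xNy : x != y by rewrite eq_sym.
  by rewrite -kappa_pair //; apply: bigmin_le_cond; rewrite cards2 xNy.
- apply: le_bigmin => [|_ /cards2P[x [y [xNy ->]]]]; first exact: bigmin_le_id.
  rewrite kappa_pair //; apply: (bigmin_inf x) => //.
  by apply: bigmin_le_cond; rewrite eq_sym.
Qed.
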